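(* The sets $$R_{1,0}=\{\lfloor n\varphi\rfloor+n\mid n\in\mathbb N\}=\{2,5,7,10,13,\dots\},\quad R_{1,1}=\{\lfloor n\varphi\rfloor+n-1\mid n\in\mathbb N\}=\{1,4,6,9,12,\dots\},$$ $$R_{2,0}=\{2\lfloor n\varphi\rfloor+n\mid n\in\mathbb N\}=\{3,8,11,16,21,\dots\}$$ form a partition of $\mathbb N$ (they are pairwise disjoint and their union is $\mathbb N$).
   Context: $\mathbb N=\{1,2,\dots\}$ and $\varphi=\frac{1+\sqrt5}{2}$ is the golden ratio. (In general $R_{i,j}$ denotes the range of $n\mapsto F(i+1)\lfloor n\varphi\rfloor+F(i)n-j$, $F$ the Fibonacci numbers with $F(0)=0,F(1)=F(2)=1$.) *)

From Stdlib Require Import Reals ZArith Lia Lra.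
Open Scope R_scope.

Definition phi : R := (1 + sqrt 5) / 2.

(* floor of a real, as an integer: Int_part x = up x - 1 = floor x *)
Definition floorZ (x : R) : Z := Int_part x.

Fixpoint fib (n : nat) : Z :=
  match n with
  | O => 0%Z
  | S O => 1%Z
  | S ((S k) as k') => (fib k' + fib k)%Z
  end.

Definition Rij (i : nat) (j : Z) (m : Z) : Prop :=
  exists n : Z, (1 <= n)%Z /\
    m = (fib (S i) * floorZ (IZR n * phi) + fib i * n - j)%Z.

(** The lower and upper Wythoff sequences [A n = floor (n phi)] and
    [B n = floor (n phi^2) = A n + n] are complementary Beatty sequences,
    because [1/phi + 1/phi^2 = 1]: they partition the positive integers.
    Wythoff's identities [A (A n) = B n - 1] and [A (B n) = A n + B n] show
    that [R_{1,1}] and [R_{2,0}] are the images of the two sequences under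
    the injective map [A], while [R_{1,0}] is the range of [B].  Hence
    [R_{1,1}] and [R_{2,0}] partition the range of [A], which is the
    complement of [R_{1,0}]. *)

From Stdlib Require Import Reals ZArith Lia Lra.
Open Scope R_scope.

Lemma phi_gt1 : 1 < phi.
Proof.
  unfold phi. assert (1 < sqrt 5) by (rewrite <- sqrt_1; apply sqrt_lt_1; lra).
  lra.
Qed.

Lemma phi_lt2 : phi < 2.
Proof.
  unfold phi.
  assert (sqrt 5 < 3) by (rewrite <- (sqrt_square 3) by lra; apply sqrt_lt_1; lra).
  lra.
Qed.

Lemma phi_sqr : phi * phi = phi + 1.
Proof.
  unfold phi. assert (sqrt 5 * sqrt 5 = 5) by (apply sqrt_sqrt; lra).
  nra.
Qed.

Lemma mul_phi_phi (x : R) : x * phi * phi = x * phi + x.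
Proof. rewrite Rmult_assoc, phi_sqr. ring. Qed.

Lemma IZR_lt_lt_succ_False (m z : Z) : IZR m < IZR z < IZR m + 1 -> False.
Proof.
  intros [H1 H2]. rewrite <- plus_IZR in H2.
  apply lt_IZR in H1. apply lt_IZR in H2. lia.
Qed.

(* Infinite descent: [n phi = k] gives [k phi = n + k], hence [(k - n) phi = n]
   with [0 < k - n < n]. *)
Lemma IZR_mul_phi_neq_IZR (n k : Z) : (1 <= n)%Z -> IZR n * phi <> IZR k.
Proof.
  intros Hn. assert (Hn0 : (0 <= n)%Z) by lia.
  revert k Hn. pattern n; apply Z_lt_induction; [clear n Hn0 | exact Hn0].
  intros n IH k Hn Hnk.
  pose proof phi_gt1; pose proof phi_lt2.
  assert (Hkphi : IZR k * phi = IZR (n + k)).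
  { rewrite plus_IZR, <- Hnk, mul_phi_phi. ring. }
  assert (Hnk_bounds : IZR n < IZR k < IZR n + IZR n).
  { apply IZR_le in Hn; simpl in Hn. rewrite <- Hnk. nra. }
  rewrite <- plus_IZR in Hnk_bounds. destruct Hnk_bounds as [Hlt Hgt].
  apply lt_IZR in Hlt. apply lt_IZR in Hgt.
  apply (IH (k - n)%Z ltac:(lia) n ltac:(lia)).
  rewrite minus_IZR, Rmult_minus_distr_r, Hkphi, Hnk, plus_IZR. ring.
Qed.

Lemma floorZ_spec (x : R) : IZR (floorZ x) <= x < IZR (floorZ x) + 1.
Proof. unfold floorZ. pose proof (base_Int_part x). lra. Qed.

Lemma floorZ_unique (x : R) (k : Z) : IZR k <= x < IZR k + 1 -> floorZ x = k.
Proof.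
  intros [H1 H2]. rewrite <- plus_IZR in H2.
  unfold floorZ, Int_part. rewrite <- (up_tech x k H1 H2). lia.
Qed.

Definition wythoffA (n : Z) : Z := floorZ (IZR n * phi).

Definition wythoffB (n : Z) : Z := (wythoffA n + n)%Z.

Lemma wythoffA_bounds (n : Z) : (1 <= n)%Z ->
  IZR (wythoffA n) < IZR n * phi < IZR (wythoffA n) + 1.
Proof.
  intros Hn. pose proof (floorZ_spec (IZR n * phi)) as [[Hlt | Heq] Hup].
  - split; assumption.
  - exfalso. exact (IZR_mul_phi_neq_IZR n _ Hn (eq_sym Heq)).
Qed.

Lemma wythoffA_pos (n : Z) : (1 <= n)%Z -> (1 <= wythoffA n)%Z.
Proof.
  intros Hn. pose proof (wythoffA_bounds n Hn) as [_ Hup].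
  pose proof phi_gt1. apply IZR_le in Hn; simpl in Hn.
  assert (Hlt : 0 < IZR (wythoffA n)) by nra.
  apply (lt_IZR 0) in Hlt. lia.
Qed.

Lemma wythoffB_pos (n : Z) : (1 <= n)%Z -> (1 <= wythoffB n)%Z.
Proof. intros Hn. pose proof (wythoffA_pos n Hn). unfold wythoffB. lia. Qed.

Lemma wythoffA_lt (n n' : Z) : (n < n')%Z -> (wythoffA n < wythoffA n')%Z.
Proof.
  intros Hnn'. unfold wythoffA.
  pose proof (floorZ_spec (IZR n * phi)). pose proof (floorZ_spec (IZR n' * phi)).
  pose proof phi_gt1.
  assert (Hgap : IZR n + 1 <= IZR n') by (rewrite <- plus_IZR; apply IZR_le; lia).
  assert (Hlt : IZR (floorZ (IZR n * phi)) < IZR (floorZ (IZR n' * phi))) by nra.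
  apply lt_IZR in Hlt. exact Hlt.
Qed.

Lemma wythoffA_inj (n n' : Z) : wythoffA n = wythoffA n' -> n = n'.
Proof.
  intros E. destruct (Z.lt_total n n') as [Hlt | [Heq | Hgt]]; [| exact Heq |].
  - pose proof (wythoffA_lt n n' Hlt). lia.
  - pose proof (wythoffA_lt n' n Hgt). lia.
Qed.

(* With [d = n phi - A n] in [(0, 1)] and [phi^2 = phi + 1] one has
   [A n * phi = A n + n - d (phi - 1)] and [B n * phi = 2 A n + n + d (2 - phi)]. *)
Lemma wythoffA_wythoffA (n : Z) : (1 <= n)%Z ->
  wythoffA (wythoffA n) = (wythoffB n - 1)%Z.
Proof.
  intros Hn. pose proof (wythoffA_bounds n Hn). pose proof phi_gt1; pose proof phi_lt2.
  apply floorZ_unique. unfold wythoffB. rewrite minus_IZR, plus_IZR.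
  set (d := IZR n * phi - IZR (wythoffA n)).
  assert (E : IZR (wythoffA n) * phi = IZR (wythoffA n) + IZR n - d * (phi - 1)).
  { unfold d. pose proof (mul_phi_phi (IZR n)). lra. }
  assert (0 < d * (phi - 1) < 1) by (unfold d; split; nra).
  rewrite E. lra.
Qed.

Lemma wythoffA_wythoffB (n : Z) : (1 <= n)%Z ->
  wythoffA (wythoffB n) = (wythoffA n + wythoffB n)%Z.
Proof.
  intros Hn. pose proof (wythoffA_bounds n Hn). pose proof phi_gt1; pose proof phi_lt2.
  apply floorZ_unique. unfold wythoffB. rewrite !plus_IZR.
  set (d := IZR n * phi - IZR (wythoffA n)).
  assert (E : (IZR (wythoffA n) + IZR n) * phi
              = IZR (wythoffA n) + (IZR (wythoffA n) + IZR n) + d * (2 - phi)).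
  { unfold d. pose proof (mul_phi_phi (IZR n)). lra. }
  assert (0 < d * (2 - phi) < 1) by (unfold d; split; nra).
  rewrite E. lra.
Qed.

(* If [A k = B n = m], then [m < k phi < m + 1] and [m < n phi^2 < m + 1];
   dividing by [phi] and [phi^2] and adding gives [m < k + n < m + 1]. *)
Lemma wythoffA_neq_wythoffB (k n : Z) : (1 <= k)%Z -> (1 <= n)%Z ->
  wythoffA k <> wythoffB n.
Proof.
  intros Hk Hn E.
  pose proof phi_gt1; pose proof phi_lt2.
  pose proof (wythoffA_bounds k Hk) as [K1 K2].
  pose proof (wythoffA_bounds n Hn) as [N1 N2].
  unfold wythoffB in E. rewrite E, plus_IZR in K1, K2.
  set (m := IZR (wythoffA n) + IZR n) in *.
  assert (Hk_bounds : m * (phi - 1) < IZR k < (m + 1) * (phi - 1)).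
  { pose proof (mul_phi_phi (IZR k)). split; nra. }
  assert (Hn_bounds : m * (2 - phi) < IZR n < (m + 1) * (2 - phi)).
  { pose proof (mul_phi_phi (IZR n)). unfold m. split; nra. }
  apply (IZR_lt_lt_succ_False (wythoffA n + n) (k + n)).
  rewrite !plus_IZR. fold m. lra.
Qed.

(* Take [n = floor ((m + 1) / phi)]: either [m < n phi], and then [m = A n],
   or [n phi <= m], and then [A (m - n) = n], i.e. [m = B (m - n)]. *)
Lemma wythoffA_or_wythoffB (m : Z) : (1 <= m)%Z ->
  (exists n, (1 <= n)%Z /\ wythoffA n = m) \/
  (exists n, (1 <= n)%Z /\ wythoffB n = m).
Proof.
  intros Hm. pose proof phi_gt1; pose proof phi_lt2.
  set (q := IZR (m + 1) / phi).
  set (n := floorZ q).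
  assert (Hq : q * phi = IZR m + 1) by (unfold q; rewrite plus_IZR; field; lra).
  assert (Hn : IZR n * phi <= IZR m + 1 < (IZR n + 1) * phi).
  { pose proof (floorZ_spec q) as Hfloor. fold n in Hfloor. split; nra. }
  apply IZR_le in Hm as Hm_R; simpl in Hm_R.
  assert (Hn0 : (0 <= n)%Z).
  { assert (Hlt : IZR (-1) < IZR n) by nra. apply lt_IZR in Hlt. lia. }
  destruct (Rlt_le_dec (IZR m) (IZR n * phi)) as [Hlt | Hle].
  - left. exists n.
    assert (Hn1 : (1 <= n)%Z).
    { destruct (Z.eq_dec n 0) as [E | E]; [rewrite E in Hlt; lra | lia]. }
    split; [exact Hn1 |].
    apply floorZ_unique. split; [lra |].
    destruct Hn as [[Hn | Hn] _]; [exact Hn |].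
    exfalso. apply (IZR_mul_phi_neq_IZR n (m + 1) Hn1). rewrite plus_IZR. exact Hn.
  - right. exists (m - n)%Z.
    assert (Hnm : (n < m)%Z).
    { destruct (Z_lt_le_dec n m) as [h | h]; [exact h |].
      exfalso. apply IZR_le in h. nra. }
    split; [lia |].
    assert (HA : wythoffA (m - n) = n).
    { apply floorZ_unique. rewrite minus_IZR.
      pose proof (mul_phi_phi (IZR n)); pose proof (mul_phi_phi (IZR m)). split; nra. }
    unfold wythoffB. rewrite HA. lia.
Qed.

Lemma Rij_1_0 (m : Z) : Rij 1 0 m <-> exists n, (1 <= n)%Z /\ m = wythoffB n.
Proof.
  unfold Rij, wythoffB, wythoffA. cbn [fib].
  split; intros [n [Hn E]]; exists n; split; lia.
Qed.

Lemma Rij_1_1 (m : Z) :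
  Rij 1 1 m <-> exists n, (1 <= n)%Z /\ m = wythoffA (wythoffA n).
Proof.
  split; intros [n [Hn E]]; exists n; split; try exact Hn;
    rewrite wythoffA_wythoffA in * by exact Hn;
    unfold wythoffB, wythoffA in *; cbn [fib] in *; lia.
Qed.

Lemma Rij_2_0 (m : Z) :
  Rij 2 0 m <-> exists n, (1 <= n)%Z /\ m = wythoffA (wythoffB n).
Proof.
  split; intros [n [Hn E]]; exists n; split; try exact Hn;
    rewrite wythoffA_wythoffB in * by exact Hn;
    unfold wythoffB, wythoffA in *; cbn [fib] in *; lia.
Qed.

Theorem corollary3p3 :
  (* each of the three sets is contained in N = {1,2,...} *)
  (forall m : Z, (Rij 1 0%Z m \/ Rij 1 1%Z m \/ Rij 2 0%Z m) -> (1 <= m)%Z) /\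
  (* their union is N *)
  (forall m : Z, (1 <= m)%Z -> Rij 1 0%Z m \/ Rij 1 1%Z m \/ Rij 2 0%Z m) /\
  (* pairwise disjoint *)
  (forall m : Z, ~ (Rij 1 0%Z m /\ Rij 1 1%Z m)) /\
  (forall m : Z, ~ (Rij 1 0%Z m /\ Rij 2 0%Z m)) /\
  (forall m : Z, ~ (Rij 1 1%Z m /\ Rij 2 0%Z m)).
Proof.
  setoid_rewrite Rij_1_0; setoid_rewrite Rij_1_1; setoid_rewrite Rij_2_0.
  split; [| split; [| split; [| split]]].
  - intros m [[n [Hn ->]] | [[n [Hn ->]] | [n [Hn ->]]]];
      auto using wythoffA_pos, wythoffB_pos.
  - intros m Hm.
    destruct (wythoffA_or_wythoffB m Hm) as [[k [Hk <-]] | [n [Hn <-]]];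
      [right | left; eauto].
    destruct (wythoffA_or_wythoffB k Hk) as [[n [Hn <-]] | [n [Hn <-]]];
      [left | right]; eauto.
  - intros m [[n [Hn ->]] [n' [Hn' E]]].
    exact (wythoffA_neq_wythoffB _ n (wythoffA_pos n' Hn') Hn (eq_sym E)).
  - intros m [[n [Hn ->]] [n' [Hn' E]]].
    exact (wythoffA_neq_wythoffB _ n (wythoffB_pos n' Hn') Hn (eq_sym E)).
  - intros m [[n [Hn ->]] [n' [Hn' E]]].
    exact (wythoffA_neq_wythoffB n n' Hn Hn' (wythoffA_inj _ _ E)).
Qed.
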